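(* For every FEE problem $(I,O,\succsim_I,\omega)$ and every FTTC mechanism on the full preference domain, the output assignment $p$ is individually rational (i.e., $p_i\succsim^{sd}_i\omega_i$ for all $i\in I$) and sd-efficient (no assignment strictly stochastically dominates $p$).
   Context: Fractional endowment exchange (FEE) problem: a tuple $(I,O,\succsim_I,\omega)$ where $I$ is a finite set of agents, $O$ a finite set of objects, each agent $i$ has a complete and transitive (possibly non-strict) preference relation $\succsim_i$ over $O$ with asymmetric part $\succ_i$ and symmetric part $\sim_i$, and $\omega=(\omega_{i,o})_{i\in I,o\in O}$ is an endowment matrix with $\omega_{i,o}\in[0,1]$, $\sum_{o\in O}\omega_{i,o}\le 1$ for each $i$, and $q_o=\sum_{i\in I}\omega_{i,o}$ an integer for each $o$. An assignment is a nonnegative matrix $p=(p_{i,o})$ with $\sum_i p_{i,o}\le q_o$ for all $o$ and $\sum_o p_{i,o}\le 1$ for all $i$; $p_i=(p_{i,o})_{o\in O}$ is $i$'s lottery. Stochastic dominance: for vectors $l,l'\in\mathbb R^{O}_+$, $l\succsim^{sd}_i l'$ if $\sum_{o'\succsim_i o}l_{o'}\ge\sum_{o'\succsim_i o}l'_{o'}$ for all $o\in O$, strictly ($\succ^{sd}_i$) if moreover some inequality is strict. An assignment $p$ strictly stochastically dominates $p'$ if $p_i\succsim^{sd}_ip'_i$ for all $i$ and $p_j\succ^{sd}_jp'_j$ for some $j$. FTTC (Fractional Top Trading Cycle) on the full preference domain. Initialize $\omega(0)=\omega$, $p(0)=0$, $O(0)=O$. At step $d\ge1$ (with $O(d-1)\ne\emptyset$):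 (i) Labeling. Put $T_0=O(d-1)$. For $k=1,2,\dots$: let $L_k$ be the set of agents $i\notin L_1\cup\dots\cup L_{k-1}$ for which there exist $o\in T_{k-1}$ and $o'\in O\setminus(T_0\cup\dots\cup T_{k-1})$ with $p_{i,o'}(d-1)>0$ and $o\sim_i o'$; for $i\in L_k$ let $\tilde O_i(d-1)$ be the set of all such $o'$ for this $i$, and let $T_k=\bigcup_{i\in L_k}\tilde O_i(d-1)$. Stop at the first $k$ with $L_k=\emptyset$. Set $L(d-1)=\bigcup_k L_k$, $\tilde O(d-1)=\bigcup_{k\ge1}T_k$, $\overline{O}(d-1)=O(d-1)\cup\tilde O(d-1)$, and $\tilde O_i(d-1)=\emptyset$ for $i\notin L(d-1)$. (ii) Pointing. The active agents are $I(d-1)=L(d-1)\cup\{i\in I:\sum_o\omega_{i,o}(d-1)>0\}$. For $i\in I(d-1)$ let $B_i$ be the set of $\succsim_i$-maximal elements of $\overline{O}(d-1)$, let $k_i$ be the least $k\ge0$ with $B_i\cap T_k\ne\emptyset$, and let $A_i(d)=B_i\cap T_{k_i}$. (iii) Trading. The mechanism chooses (possibly depending on the history): a ratio matrix $\lambda(d)=(\lambda_{i,o}(d))_{i\in I(d-1),o\in\overline{O}(d-1)}$, nonnegative, with $\sum_{i\in I(d-1)}\lambda_{i,o}(d)=1$ for each $o\in\overline O(d-1)$, $\lambda_{i,o}(d)>0$ only if $\omega_{i,o}(d-1)>0$ (for $o\in O(d-1)$) and only if $o\in\tilde O_i(d-1)$ (for $o\in\tilde O(d-1)$); a quota matrix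 $\beta(d)$ on $I(d-1)\times O(d-1)$ with $0\le\beta_{i,o}(d)\le\omega_{i,o}(d-1)$; a division matrix $\gamma(d)$ on $I(d-1)\times\overline O(d-1)$, nonnegative, with $\sum_o\gamma_{i,o}(d)=1$ and $\gamma_{i,o}(d)>0$ only if $o\in A_i(d)$. Let $x^*(d)=(x^*_a(d))_{a\in I(d-1)\cup\overline O(d-1)}$ be the maximum (componentwise largest) nonnegative solution of $x_o=\sum_{i\in I(d-1)}\gamma_{i,o}(d)x_i$ for all $o\in\overline O(d-1)$ and $x_i=\sum_{o\in\overline O(d-1)}\lambda_{i,o}(d)x_o$ for all $i\in I(d-1)$, subject to $\lambda_{i,o}(d)x_o\le\beta_{i,o}(d)$ for $o\in O(d-1)$ and $\lambda_{i,o}(d)x_o\le p_{i,o}(d-1)$ for $o\in\tilde O(d-1)$. For $i\in I(d-1)$: $\omega_{i,o}(d)=\omega_{i,o}(d-1)-\lambda_{i,o}(d)x^*_o(d)$ if $o\in O(d-1)$ and $0$ otherwise; $p_{i,o}(d)=p_{i,o}(d-1)-\mathbf 1[o\in\tilde O_i(d-1)]\lambda_{i,o}(d)x^*_o(d)+\gamma_{i,o}(d)x^*_i(d)$ (with $\gamma_{i,o}(d)=0$ for $o\notin\overline O(d-1)$). For $i\notin I(d-1)$, $\omega_i(d)=\omega_i(d-1)$, $p_i(d)=p_i(d-1)$. Let $O(d)=\{o\in O(d-1):\sum_i\omega_{i,o}(d)>0\}$. If $O(d)=\emptyset$ stop and output $p(d)$; otherwise go to step $d+1$. (Standing assumption: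 the maximum solution exists at each step and the procedure ends after finitely many steps.) An FTTC mechanism is specified by a rule choosing $\lambda(d),\beta(d),\gamma(d)$ at every step. *)

From mathcomp Require Import all_boot all_order all_algebra.
From mathcomp Require Import reals.
Set Implicit Arguments. Unset Strict Implicit. Unset Printing Implicit Defensive.
Import Order.TTheory GRing.Theory Num.Theory.
Local Open Scope ring_scope.

Section FEE.
Variables (R : realType) (I O : finType).

(** Preferences: [pref i a b] means  a ≿_i b. *)
Definition weak_order (pref : I -> rel O) : Prop :=
  (forall i a b, pref i a b || pref i b a) /\
  (forall i a b c, pref i a b -> pref i b c -> pref i a c).

Definition indiff (pref : I -> rel O) i a b := pref i a b && pref i b a.

Definition quota (om : I -> O -> R) (o : O) : R := \sum_(i : I) om i o.

Definition FEE_endowment (om : I -> O -> R) : Prop :=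
  (forall i o, 0 <= om i o <= 1) /\
  (forall i, \sum_(o : O) om i o <= 1) /\
  (forall o, exists n : nat, quota om o = n%:R).

Definition is_assignment (om : I -> O -> R) (p : I -> O -> R) : Prop :=
  (forall i o, 0 <= p i o) /\
  (forall o, \sum_(i : I) p i o <= quota om o) /\
  (forall i, \sum_(o : O) p i o <= 1).

Definition sd_ge (pref : I -> rel O) i (l l' : O -> R) : Prop :=
  forall o, \sum_(o' | pref i o' o) l' o' <= \sum_(o' | pref i o' o) l o'.

Definition sd_gt (pref : I -> rel O) i (l l' : O -> R) : Prop :=
  sd_ge pref i l l' /\
  exists o, \sum_(o' | pref i o' o) l' o' < \sum_(o' | pref i o' o) l o'.

Definition individually_rational pref (om p : I -> O -> R) : Prop :=
  forall i, sd_ge pref i (p i) (om i).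

Definition sd_efficient pref (om p : I -> O -> R) : Prop :=
  ~ exists p' : I -> O -> R,
      [/\ is_assignment om p',
          (forall i, sd_ge pref i (p' i) (p i)) &
          exists j, sd_gt pref j (p' j) (p j)].

Definition tildeset pref (p : I -> O -> R) i (T U : {set O}) : {set O} :=
  [set o' | [&& o' \notin U, 0 < p i o' & [exists o in T, indiff pref i o o']]].

(** [levels pref p Ocur k] = (T_k, L_k, T_0 ∪ … ∪ T_k, L_1 ∪ … ∪ L_k), with L_0 = ∅.
    Once some L_k is empty, T_k is empty and all later levels are empty, so
    iterating beyond the stopping index is harmless. *)
Fixpoint levels pref (p : I -> O -> R) (Ocur : {set O}) (k : nat)
  : {set O} * {set I} * {set O} * {set I} :=
  match k with
  | 0 => (Ocur, set0, Ocur, set0)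
  | k'.+1 =>
      let: (T, _, U, LU) := levels pref p Ocur k' in
      let L' := [set i | (i \notin LU) && (tildeset pref p i T U != set0)] in
      let T' := \bigcup_(i in L') tildeset pref p i T U in
      (T', L', U :|: T', LU :|: L')
  end.

Definition Tlev pref p Ocur k : {set O} := (levels pref p Ocur k).1.1.1.
Definition Llev pref p Ocur k : {set I} := (levels pref p Ocur k).1.1.2.
Definition Ulev pref p Ocur k : {set O} := (levels pref p Ocur k).1.2.

(** All nonempty levels have index at most #|I| + 1. *)
Definition nlev : nat := #|I|.+2.

Definition Lall pref p Ocur : {set I} := \bigcup_(k < nlev) Llev pref p Ocur k.
Definition Ttilde pref p Ocur : {set O} := \bigcup_(k < nlev) Tlev pref p Ocur k.+1.
Definition Otilde_i pref p Ocur i : {set O} :=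
  \bigcup_(k < nlev | i \in Llev pref p Ocur k.+1)
     tildeset pref p i (Tlev pref p Ocur k) (Ulev pref p Ocur k).
Definition Obar pref p Ocur : {set O} := Ocur :|: Ttilde pref p Ocur.

Definition Iact pref (om p : I -> O -> R) Ocur : {set I} :=
  Lall pref p Ocur :|: [set i | 0 < \sum_(o : O) om i o].

Definition Bset pref p Ocur i : {set O} :=
  [set o in Obar pref p Ocur | [forall o' in Obar pref p Ocur, pref i o o']].

Definition Aset pref p Ocur i : {set O} :=
  [set o in Bset pref p Ocur i |
     [exists k : 'I_nlev,
        (o \in Tlev pref p Ocur k) &&
        [forall k' : 'I_nlev, (k' < k)%N ==>
            (Bset pref p Ocur i :&: Tlev pref p Ocur k' == set0)]]].

Definition valid_choice pref (om p : I -> O -> R) (Ocur : {set O})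
    (lam beta gam : I -> O -> R) : Prop :=
  let Ia := Iact pref om p Ocur in
  let Ob := Obar pref p Ocur in
  (forall i o, i \in Ia -> o \in Ob -> 0 <= lam i o) /\
  (forall o, o \in Ob -> \sum_(i in Ia) lam i o = 1) /\
  (forall i o, i \in Ia -> o \in Ocur -> 0 < lam i o -> 0 < om i o) /\
  (forall i o, i \in Ia -> o \in Ttilde pref p Ocur -> 0 < lam i o ->
      o \in Otilde_i pref p Ocur i) /\
  (forall i o, i \in Ia -> o \in Ocur -> 0 <= beta i o <= om i o) /\
  (forall i o, i \in Ia -> o \in Ob -> 0 <= gam i o) /\
  (forall i, i \in Ia -> \sum_(o in Ob) gam i o = 1) /\
  (forall i o, i \in Ia -> o \in Ob -> 0 < gam i o -> o \in Aset pref p Ocur i).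

(** Nonnegative solutions of the trading system (x indexed by I(d-1) ∪ Obar(d-1)). *)
Definition trade_feasible pref (om p : I -> O -> R) (Ocur : {set O})
    (lam beta gam : I -> O -> R) (xI : I -> R) (xO : O -> R) : Prop :=
  let Ia := Iact pref om p Ocur in
  let Ob := Obar pref p Ocur in
  (forall i, i \in Ia -> 0 <= xI i) /\
  (forall o, o \in Ob -> 0 <= xO o) /\
  (forall o, o \in Ob -> xO o = \sum_(i in Ia) gam i o * xI i) /\
  (forall i, i \in Ia -> xI i = \sum_(o in Ob) lam i o * xO o) /\
  (forall i o, i \in Ia -> o \in Ocur -> lam i o * xO o <= beta i o) /\
  (forall i o, i \in Ia -> o \in Ttilde pref p Ocur -> lam i o * xO o <= p i o).

Definition max_solution pref (om p : I -> O -> R) (Ocur : {set O})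
    (lam beta gam : I -> O -> R) (xI : I -> R) (xO : O -> R) : Prop :=
  trade_feasible pref om p Ocur lam beta gam xI xO /\
  forall yI yO, trade_feasible pref om p Ocur lam beta gam yI yO ->
    (forall i, i \in Iact pref om p Ocur -> yI i <= xI i) /\
    (forall o, o \in Obar pref p Ocur -> yO o <= xO o).

Definition FTTC_step pref (om p : I -> O -> R) (Ocur : {set O})
    (om' p' : I -> O -> R) (Onext : {set O}) : Prop :=
  Ocur != set0 /\
  exists (lam beta gam : I -> O -> R) (xI : I -> R) (xO : O -> R),
    [/\ valid_choice pref om p Ocur lam beta gam,
        max_solution pref om p Ocur lam beta gam xI xO,
        (forall i o, om' i o =
           if i \in Iact pref om p Ocur then
             (if o \in Ocur then om i o - lam i o * xO o else 0)
           else om i o),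
        (forall i o, p' i o =
           if i \in Iact pref om p Ocur then
             p i o
             - (if o \in Otilde_i pref p Ocur i then lam i o * xO o else 0)
             + (if o \in Obar pref p Ocur then gam i o * xI i else 0)
           else p i o) &
        Onext = [set o in Ocur | 0 < \sum_(i : I) om' i o]].

(** Any history-dependent
    rule choosing λ, β, γ yields such a run, and every such run arises from some rule. *)
Definition FTTC_run pref (om : I -> O -> R) (D : nat)
    (omd pd : nat -> I -> O -> R) (Od : nat -> {set O}) : Prop :=
  [/\ (forall i o, omd 0%N i o = om i o),
      (forall i o, pd 0%N i o = 0),
      Od 0%N = setT,
      (forall d, (d < D)%N ->
         FTTC_step pref (omd d) (pd d) (Od d) (omd d.+1) (pd d.+1) (Od d.+1)) &
      Od D = set0].

End FEE.

From mathcomp Require Import all_boot all_order all_algebra.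
From mathcomp Require Import reals.
From mathcomp Require Import lra.
From Stdlib Require Import Classical ClassicalEpsilon.
Set Implicit Arguments. Unset Strict Implicit. Unset Printing Implicit Defensive.
Import Order.TTheory GRing.Theory Num.Theory.
Local Open Scope ring_scope.

(** Every trading step preserves the column sums of
  p + ω (objects are only moved between agents) and, for every agent i and
  every upper contour set U of ≿_i, does not decrease the mass of p_i + ω_i
  on U: what i receives goes to its favourite objects B_i of Obar, while what
  i gives away lies in Obar and amounts to exactly what it receives.  At the
  end ω = 0, so p_i ≿^sd ω_i.

  Call an object reachable at step d if it is linked to an
  available object by a chain of indifferences of agents who hold the next
  object of the chain.  Along the run, every held object is weakly preferred
  by its holder to every reachable object, reachable sets shrink, and the
  labeling of the step computes exactly the reachable set.  Counting, for
  each object, the steps at which it is unreachable gives a price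
  φ : O -> nat such that, on the support of p_i, φ weakly (resp. strictly)
  decreases along ≿_i (resp. ≻_i).  A general lemma shows that an assignment
  exhausting all quotas and supported by such a price is sd-efficient. *)

Section Preferences.
Variables (I O : finType) (pref : I -> rel O).
Hypothesis pref_weak : weak_order pref.

Lemma pref_trans i a b c : pref i a b -> pref i b c -> pref i a c.
Proof. by case: pref_weak => _; apply. Qed.

Lemma pref_total i a b : pref i a b || pref i b a.
Proof. by case: pref_weak. Qed.

Lemma pref_refl i a : pref i a a.
Proof. by have := pref_total i a a; rewrite orbb. Qed.

End Preferences.

Section Labeling.
Variables (R : realType) (I O : finType) (pref : I -> rel O).
Variables (p : I -> O -> R) (Ocur : {set O}).

Local Notation T := (Tlev pref p Ocur).
Local Notation L := (Llev pref p Ocur).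
Local Notation U := (Ulev pref p Ocur).
Local Notation Ob := (Obar pref p Ocur).

Definition Lunion k : {set I} := (levels pref p Ocur k).2.

Lemma levels_succ k :
  [/\ L k.+1 = [set i | (i \notin Lunion k) && (tildeset pref p i (T k) (U k) != set0)],
      T k.+1 = \bigcup_(i in L k.+1) tildeset pref p i (T k) (U k),
      U k.+1 = U k :|: T k.+1 &
      Lunion k.+1 = Lunion k :|: L k.+1].
Proof.
rewrite /Tlev /Llev /Ulev /Lunion /=.
by case: (levels pref p Ocur k) => [[[T' L'] U'] LU].
Qed.

Lemma tildesetP i (A B : {set O}) o :
  reflect [/\ o \notin B, 0 < p i o & exists2 y, y \in A & indiff pref i y o]
          (o \in tildeset pref p i A B).
Proof.
rewrite inE; apply: (iffP and3P) => [[-> -> /existsP[y /andP[yA yo]]]|[-> -> [y yA yo]]].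
  by split=> //; exists y.
by split=> //; apply/existsP; exists y; rewrite yA.
Qed.

Lemma Ocur_sub_Ulev k : Ocur \subset U k.
Proof.
elim: k => [|k IH] //; have [_ _ -> _] := levels_succ k.
exact: subset_trans IH (subsetUl _ _).
Qed.

Lemma Ulev_Tlev k o : o \in U k -> exists2 m, (m <= k)%N & o \in T m.
Proof.
elim: k => [|k IH]; first by exists 0%N.
have [_ _ -> _] := levels_succ k; rewrite inE => /orP[/IH[m mk om]|ok].
  by exists m => //; apply: leqW.
by exists k.+1.
Qed.

Lemma Lunion_Llev k i : i \in Lunion k -> exists2 l, (l < k)%N & i \in L l.+1.
Proof.
elim: k => [|k IH]; first by rewrite /Lunion /= inE.
have [_ _ _ ->] := levels_succ k; rewrite inE => /orP[/IH[m mk om]|ok].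
  by exists m => //; apply: ltnW.
by exists k.
Qed.

(** Every nonempty level k labels new agents at each level 1..k, hence k <= #|I|. *)
Lemma Tlev_card k : T k != set0 -> (k <= #|Lunion k|)%N.
Proof.
elim: k => [|k IH] // Tk_ne.
have [HL HT _ HLU] := levels_succ k.
have [o oT] := set0Pn _ Tk_ne; rewrite HT in oT.
case/bigcupP: oT => i iL /tildesetP[_ _ [y yT _]].
have disj : Lunion k :&: L k.+1 = set0.
  by apply/setP=> j; rewrite !inE HL inE; case: (j \in Lunion k).
have L_pos : (0 < #|L k.+1|)%N by rewrite card_gt0; apply/set0Pn; exists i.
have Tk_ne' : T k != set0 by apply/set0Pn; exists y.
rewrite HLU cardsU disj cards0 subn0.
by have := leq_add (IH Tk_ne') L_pos; rewrite addn1.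
Qed.

Lemma Tlev_bound k : T k != set0 -> (k <= #|I|)%N.
Proof. by move/Tlev_card/leq_trans; apply; apply: max_card. Qed.

Lemma Obar_Tlev o : o \in Ob -> exists2 k, (k <= #|I|)%N & o \in T k.
Proof.
rewrite /Obar inE => /orP[oc|]; first by exists 0%N.
move=> /bigcupP[k _ ok]; exists k.+1 => //.
by apply: Tlev_bound; apply/set0Pn; exists o.
Qed.

Lemma Tlev_Obar k o : (k <= nlev I)%N -> o \in T k -> o \in Ob.
Proof.
rewrite /Obar inE; case: k => [|k] kn ok; first by rewrite ok.
by apply/orP; right; apply/bigcupP; exists (Ordinal kn).
Qed.

Lemma Ulev_Obar k o : (k <= nlev I)%N -> o \in U k -> o \in Ob.
Proof.
move=> kn /Ulev_Tlev[m mk om]; apply: (@Tlev_Obar m) => //; exact: leq_trans kn.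
Qed.

Lemma Ttilde_notin_Ocur o : o \in Ttilde pref p Ocur -> o \notin Ocur.
Proof.
move=> /bigcupP[k _]; have [_ -> _ _] := levels_succ k.
move=> /bigcupP[i _ /tildesetP[oU _ _]].
by apply: contra oU; apply: (subsetP (Ocur_sub_Ulev k)).
Qed.

Lemma Otilde_Ttilde i o : o \in Otilde_i pref p Ocur i -> o \in Ttilde pref p Ocur.
Proof.
move=> /bigcupP[k ik ok]; apply/bigcupP; exists k => //.
by have [_ -> _ _] := levels_succ k; apply/bigcupP; exists i.
Qed.

Lemma level_link_Obar l j y o' :
  (l <= #|I|)%N -> y \in T l -> 0 < p j o' -> indiff pref j y o' ->
  (j \in L l.+1) || (j \notin Lunion l) -> o' \in Ob.
Proof.
move=> lI yT pjo' yo' j_free.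
have lnl : (l.+1 <= nlev I)%N by rewrite /nlev ltnS; apply: leqW.
have [o'U|o'U] := boolP (o' \in U l); first exact: Ulev_Obar (ltnW lnl) o'U.
have o'T : o' \in tildeset pref p j (T l) (U l) by apply/tildesetP; split=> //; exists y.
have [HL HT _ _] := levels_succ l.
have jL : j \in L l.+1.
  by case/orP: j_free => // jU; rewrite HL inE jU; apply/set0Pn; exists o'.
by apply: (Tlev_Obar lnl); rewrite HT; apply/bigcupP; exists j.
Qed.

End Labeling.

Section Reachability.
Variables (R : realType) (I O : finType) (pref : I -> rel O).
Hypothesis pref_weak : weak_order pref.

Inductive reachable (p : I -> O -> R) (Ocur : {set O}) : O -> Prop :=
| reach_avail o : o \in Ocur -> reachable p Ocur o
| reach_link j o o' :
    reachable p Ocur o -> 0 < p j o' -> indiff pref j o o' -> reachable p Ocur o'.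

Lemma Tlev_reachable p Ocur k o : o \in Tlev pref p Ocur k -> reachable p Ocur o.
Proof.
elim: k o => [|k IH] o; first exact: reach_avail.
have [_ -> _ _] := levels_succ pref p Ocur k.
case/bigcupP => i _ /tildesetP[_ pio [y yT yo]].
exact: reach_link (IH _ yT) pio yo.
Qed.

Lemma Obar_reachable p Ocur o : o \in Obar pref p Ocur -> reachable p Ocur o.
Proof. by case/Obar_Tlev => k _; apply: Tlev_reachable. Qed.

Lemma Obar_indiff_closed (p : I -> O -> R) Ocur j o o' :
  (forall b a, 0 < p j b -> a \in Obar pref p Ocur -> pref j b a) ->
  o \in Obar pref p Ocur -> 0 < p j o' -> indiff pref j o o' ->
  o' \in Obar pref p Ocur.
Proof.
move=> held_top oO pjo' oo'; have [k kI ok] := Obar_Tlev oO.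
have [jU|jU] := boolP (j \in Lunion pref p Ocur k); last first.
  by apply: (level_link_Obar kI ok pjo' oo'); rewrite jU orbT.
have [l lk jL] := Lunion_Llev jU.
have [HL _ _ _] := levels_succ pref p Ocur l.
move: (jL); rewrite HL inE => /andP[_ /set0Pn[o'' /tildesetP[_ pjo'' [y yT yo'']]]].
have lI : (l <= #|I|)%N := leq_trans (ltnW lk) kI.
have yO : y \in Obar pref p Ocur.
  by apply: (Tlev_Obar _ yT); rewrite /nlev; apply: leq_trans lI _; rewrite leqW.
(* y ~_j o'' ≿_j o ~_j o', and o' ≿_j y because j holds o' *)
have y_above_o' : pref j y o'.
  case/andP: yo'' => yo''1 _; case/andP: oo' => oo'1 _.
  have o''_above_o := held_top _ _ pjo'' oO.
  exact: (pref_trans pref_weak yo''1 (pref_trans pref_weak o''_above_o oo'1)).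
have yo' : indiff pref j y o' by rewrite /indiff y_above_o' held_top.
by apply: (level_link_Obar lI yT pjo' yo'); rewrite jL.
Qed.

Lemma reachable_Obar (p : I -> O -> R) Ocur :
  (forall i b a, 0 < p i b -> reachable p Ocur a -> pref i b a) ->
  forall o, reachable p Ocur o -> o \in Obar pref p Ocur.
Proof.
move=> held_top o; elim=> {o} [o oc|j o o' _ oO pjo' oo'].
  by rewrite /Obar inE oc.
apply: (Obar_indiff_closed _ oO pjo' oo') => b a pjb /Obar_reachable.
exact: held_top.
Qed.

End Reachability.

Section TradingStep.
Variables (R : realType) (I O : finType) (pref : I -> rel O).
Hypothesis pref_weak : weak_order pref.
Variables (om p : I -> O -> R) (Ocur : {set O}) (om' p' : I -> O -> R) (On : {set O}).
Variables (lam beta gam : I -> O -> R) (xI : I -> R) (xO : O -> R).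
Hypothesis choice_ok : valid_choice pref om p Ocur lam beta gam.
Hypothesis x_feasible : trade_feasible pref om p Ocur lam beta gam xI xO.
Hypothesis om'_def : forall i o, om' i o =
  if i \in Iact pref om p Ocur then
    (if o \in Ocur then om i o - lam i o * xO o else 0)
  else om i o.
Hypothesis p'_def : forall i o, p' i o =
  if i \in Iact pref om p Ocur then
    p i o
    - (if o \in Otilde_i pref p Ocur i then lam i o * xO o else 0)
    + (if o \in Obar pref p Ocur then gam i o * xI i else 0)
  else p i o.
Hypothesis On_def : On = [set o in Ocur | 0 < \sum_(i : I) om' i o].
Hypothesis om_ge0 : forall i o, 0 <= om i o.
Hypothesis p_ge0 : forall i o, 0 <= p i o.
Hypothesis om_off : forall i o, o \notin Ocur -> om i o = 0.

Local Notation Ia := (Iact pref om p Ocur).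
Local Notation Ob := (Obar pref p Ocur).

Let lam_ge0 i o : i \in Ia -> o \in Ob -> 0 <= lam i o.
Proof. by case: choice_ok => H _; apply: H. Qed.
Let lam_sum o : o \in Ob -> \sum_(i in Ia) lam i o = 1.
Proof. by case: choice_ok => _ [H _]; apply: H. Qed.
Let lam_relabeled i o : i \in Ia -> o \in Ttilde pref p Ocur -> 0 < lam i o ->
  o \in Otilde_i pref p Ocur i.
Proof. by case: choice_ok => _ [_ [_ [H _]]]; apply: H. Qed.
Let beta_bounds i o : i \in Ia -> o \in Ocur -> 0 <= beta i o <= om i o.
Proof. by case: choice_ok => _ [_ [_ [_ [H _]]]]; apply: H. Qed.
Let gam_ge0 i o : i \in Ia -> o \in Ob -> 0 <= gam i o.
Proof. by case: choice_ok => _ [_ [_ [_ [_ [H _]]]]]; apply: H. Qed.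
Let gam_sum i : i \in Ia -> \sum_(o in Ob) gam i o = 1.
Proof. by case: choice_ok => _ [_ [_ [_ [_ [_ [H _]]]]]]; apply: H. Qed.
Let gam_pointing i o : i \in Ia -> o \in Ob -> 0 < gam i o -> o \in Aset pref p Ocur i.
Proof. by case: choice_ok => _ [_ [_ [_ [_ [_ [_ H]]]]]]; apply: H. Qed.
Let xI_ge0 i : i \in Ia -> 0 <= xI i.
Proof. by case: x_feasible => H _; apply: H. Qed.
Let xO_ge0 o : o \in Ob -> 0 <= xO o.
Proof. by case: x_feasible => _ [H _]; apply: H. Qed.
Let xO_eq o : o \in Ob -> xO o = \sum_(i in Ia) gam i o * xI i.
Proof. by case: x_feasible => _ [_ [H _]]; apply: H. Qed.
Let xI_eq i : i \in Ia -> xI i = \sum_(o in Ob) lam i o * xO o.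
Proof. by case: x_feasible => _ [_ [_ [H _]]]; apply: H. Qed.
Let traded_endow_le i o : i \in Ia -> o \in Ocur -> lam i o * xO o <= beta i o.
Proof. by case: x_feasible => _ [_ [_ [_ [H _]]]]; apply: H. Qed.
Let traded_held_le i o : i \in Ia -> o \in Ttilde pref p Ocur -> lam i o * xO o <= p i o.
Proof. by case: x_feasible => _ [_ [_ [_ [_ H]]]]; apply: H. Qed.

Definition out_held i o := if o \in Otilde_i pref p Ocur i then lam i o * xO o else 0.
Definition out_endow i o := if o \in Ocur then lam i o * xO o else 0.
Definition inflow i o := if o \in Ob then gam i o * xI i else 0.

Lemma Ocur_Obar o : o \in Ocur -> o \in Ob.
Proof. by rewrite /Obar inE => ->. Qed.

Lemma Ttilde_Obar o : o \in Ttilde pref p Ocur -> o \in Ob.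
Proof. by rewrite /Obar inE => ->; rewrite orbT. Qed.

Lemma inflow_ge0 i o : i \in Ia -> 0 <= inflow i o.
Proof. by move=> iA; rewrite /inflow; case: ifP => // oB; rewrite mulr_ge0 ?gam_ge0 ?xI_ge0. Qed.

Lemma out_held_ge0 i o : i \in Ia -> 0 <= out_held i o.
Proof.
move=> iA; rewrite /out_held; case: ifP => // /Otilde_Ttilde/Ttilde_Obar oB.
by rewrite mulr_ge0 ?lam_ge0 ?xO_ge0.
Qed.

Lemma outflowE i o : i \in Ia ->
  out_held i o + out_endow i o = if o \in Ob then lam i o * xO o else 0.
Proof.
move=> iA; rewrite /out_held /out_endow.
have [oc|oc] := boolP (o \in Ocur).
  have -> : (o \in Otilde_i pref p Ocur i) = false.
    by apply/negP => /Otilde_Ttilde/Ttilde_notin_Ocur; rewrite oc.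
  by rewrite (Ocur_Obar oc) add0r.
rewrite addr0; have [ot|ot] := boolP (o \in Ttilde pref p Ocur).
  rewrite (Ttilde_Obar ot); case: ifP => // o_notrel.
  have := lam_ge0 iA (Ttilde_Obar ot); rewrite le0r => /orP[/eqP->|lam_pos].
    by rewrite mul0r.
  by rewrite (lam_relabeled iA ot lam_pos) in o_notrel.
have -> : (o \in Ob) = false by rewrite /Obar inE (negbTE oc) (negbTE ot).
by case: ifP => // /Otilde_Ttilde; rewrite (negbTE ot).
Qed.

Lemma outflow_ge0 i o : i \in Ia -> 0 <= out_held i o + out_endow i o.
Proof. by move=> iA; rewrite outflowE //; case: ifP => // oB; rewrite mulr_ge0 ?lam_ge0 ?xO_ge0. Qed.

Lemma sum_inflow i : i \in Ia -> \sum_o inflow i o = xI i.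
Proof. by move=> iA; rewrite /inflow -big_mkcond /= -big_distrl /= gam_sum // mul1r. Qed.

Lemma sum_outflow i : i \in Ia -> \sum_o (out_held i o + out_endow i o) = xI i.
Proof. by move=> iA; under eq_bigr do rewrite outflowE //; rewrite -big_mkcond /= xI_eq. Qed.

Lemma sum_inflow_agents o : \sum_(i in Ia) inflow i o = if o \in Ob then xO o else 0.
Proof. by rewrite /inflow; case: ifP => oB; [rewrite xO_eq | rewrite big1]. Qed.

Lemma sum_outflow_agents o :
  \sum_(i in Ia) (out_held i o + out_endow i o) = if o \in Ob then xO o else 0.
Proof.
rewrite (eq_bigr (fun i => if o \in Ob then lam i o * xO o else 0)); last first.
  by move=> i iA; rewrite outflowE.
by case: ifP => oB; [rewrite -big_distrl /= lam_sum // mul1r | rewrite big1].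
Qed.

Lemma step_p_ge0 i o : 0 <= p' i o.
Proof.
rewrite p'_def; case: ifP => iA //.
rewrite -/(out_held i o) -/(inflow i o) addr_ge0 ?inflow_ge0 // subr_ge0 /out_held.
by case: ifP => // /Otilde_Ttilde ot; apply: traded_held_le.
Qed.

Lemma step_om_ge0 i o : 0 <= om' i o.
Proof.
rewrite om'_def; case: ifP => iA //; case: ifP => // oc.
have /andP[_ beta_le] := beta_bounds iA oc.
by rewrite subr_ge0 (le_trans (traded_endow_le iA oc) beta_le).
Qed.

Lemma step_On_sub : On \subset Ocur.
Proof. by rewrite On_def; apply/subsetP => o; rewrite inE => /andP[]. Qed.

Lemma step_om_off i o : o \notin On -> om' i o = 0.
Proof.
move=> oN; have [oc|oc] := boolP (o \in Ocur); last first.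
  by rewrite om'_def; case: ifP => _; [rewrite (negbTE oc)|rewrite om_off].
move: oN; rewrite On_def inE oc /= -leNgt => sum_le0.
have sum0 : \sum_j om' j o = 0.
  by apply/eqP; rewrite eq_le sum_le0 sumr_ge0 // => j _; apply: step_om_ge0.
by apply: (psumr_eq0P _ sum0) => // j _; apply: step_om_ge0.
Qed.

Lemma step_support i b : 0 < p' i b -> 0 < p i b \/ b \in Bset pref p Ocur i.
Proof.
rewrite p'_def; case: ifP => iA; last by left.
rewrite -/(out_held i b) -/(inflow i b) => pos.
have [gam_pos|gam_npos] := boolP (0 < gam i b).
  have [bB|bB] := boolP (b \in Ob).
    by right; have := gam_pointing iA bB gam_pos; rewrite inE => /andP[].
  left; move: pos; rewrite /inflow (negbTE bB) addr0 => /lt_le_trans; apply.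
  by rewrite lerBlDr lerDl out_held_ge0.
left; have inflow0 : inflow i b = 0.
  rewrite /inflow; case: ifP => // bB.
  have := gam_ge0 iA bB; rewrite le_eqVlt (negbTE gam_npos) orbF.
  by move/eqP <-; rewrite mul0r.
move: pos; rewrite inflow0 addr0 => /lt_le_trans; apply.
by rewrite lerBlDr lerDl out_held_ge0.
Qed.

Lemma step_mass_active i o : i \in Ia ->
  p' i o + om' i o = (p i o + om i o) + (inflow i o - (out_held i o + out_endow i o)).
Proof.
move=> iA; rewrite p'_def om'_def iA -/(out_held i o) -/(inflow i o).
have -> : (if o \in Ocur then om i o - lam i o * xO o else 0) = om i o - out_endow i o.
  by rewrite /out_endow; case: ifP => // /negbT oc; rewrite om_off // subr0.
lra.
Qed.

Lemma step_mass_inactive i o : i \notin Ia -> p' i o + om' i o = p i o + om i o.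
Proof. by move=> iA; rewrite p'_def om'_def (negbTE iA). Qed.

Lemma step_conserve o : \sum_i (p' i o + om' i o) = \sum_i (p i o + om i o).
Proof.
rewrite (bigID (fun i => i \in Ia)) [RHS](bigID (fun i => i \in Ia)) /=.
congr (_ + _); last by apply: eq_bigr => i iA; rewrite step_mass_inactive.
rewrite (eq_bigr _ (fun i => step_mass_active o)) big_split /= sumrB.
by rewrite sum_inflow_agents sum_outflow_agents subrr addr0.
Qed.

Lemma Bset_pref i o o1 : o \in Bset pref p Ocur i -> o1 \in Ob -> pref i o o1.
Proof. by rewrite inE => /andP[_ /forall_inP H] /H. Qed.

Lemma inflow_Bset i o : i \in Ia -> inflow i o != 0 -> o \in Bset pref p Ocur i.
Proof.
move=> iA; rewrite /inflow; case: ifP => oB; last by rewrite eqxx.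
have [gam_pos _|gam_npos] := boolP (0 < gam i o).
  by have := gam_pointing iA oB gam_pos; rewrite inE => /andP[].
have -> : gam i o = 0 by apply/eqP; rewrite eq_le gam_ge0 // andbT leNgt.
by rewrite mul0r eqxx.
Qed.

Lemma upper_inflow_ge i o0 : i \in Ia ->
  \sum_(o | pref i o o0) (out_held i o + out_endow i o) <= \sum_(o | pref i o o0) inflow i o.
Proof.
move=> iA; have [/existsP[o1 /andP[o1B o1_up]]|/existsPn no_up] :=
  boolP [exists o1, (o1 \in Ob) && pref i o1 o0]; last first.
  (* no labeled object in the contour set: nothing in it is traded away *)
  rewrite big1 ?sumr_ge0 // => [o _|o o_up]; first exact: inflow_ge0.
  by rewrite outflowE //; case: ifP => // oB; have := no_up o; rewrite oB o_up.
(* otherwise all of i's inflow lands in the contour set *)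
have all_in : \sum_(o | pref i o o0) inflow i o = xI i.
  rewrite -(sum_inflow iA) [RHS](bigID (fun o => pref i o o0)) /=.
  rewrite [X in _ = _ + X]big1 ?addr0 // => o o_notup.
  have [//|/(inflow_Bset iA) oB] := eqVneq (inflow i o) 0.
  by rewrite (pref_trans pref_weak (Bset_pref oB o1B) o1_up) in o_notup.
rewrite all_in -(sum_outflow iA) [X in _ <= X](bigID (fun o => pref i o o0)) /= lerDl.
by apply: sumr_ge0 => o _; apply: outflow_ge0.
Qed.

Lemma step_IR i o0 :
  \sum_(o | pref i o o0) (p i o + om i o) <= \sum_(o | pref i o o0) (p' i o + om' i o).
Proof.
have [iA|iA] := boolP (i \in Ia); last first.
  by rewrite [X in _ <= X](eq_bigr _ (fun o _ => step_mass_inactive o iA)).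
rewrite [X in _ <= X](eq_bigr _ (fun o _ => step_mass_active o iA)).
rewrite [X in _ <= X]big_split /= lerDl sumrB subr_ge0.
exact: upper_inflow_ge.
Qed.

End TradingStep.

Section PriceEfficiency.
Variables (R : realType) (I O : finType) (pref : I -> rel O).
Hypothesis pref_weak : weak_order pref.
Variables (om p : I -> O -> R) (price : O -> nat).
Hypothesis p_ge0 : forall i o, 0 <= p i o.
Hypothesis p_exhausts : forall o, \sum_i p i o = quota om o.
Hypothesis price_weak :
  forall i a b, 0 < p i b -> pref i a b -> (price b <= price a)%N.
Hypothesis price_strict :
  forall i a b, 0 < p i b -> pref i a b -> ~~ pref i b a -> (price b < price a)%N.

Definition upper_mass (q : I -> O -> R) i t : R := \sum_(o | (t <= price o)%N) q i o.

Section Dominating.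
Variables (p' : I -> O -> R).
Hypothesis p'_ge0 : forall i o, 0 <= p' i o.
Hypothesis p'_dom : forall i, sd_ge pref i (p' i) (p i).

(** The supported objects of price >= t lie in the upper contour set of the
    worst of them, on which p'_i has at least as much mass as p_i. *)
Lemma upper_mass_le i t : upper_mass p i t <= upper_mass p' i t.
Proof.
have [/existsP[b0 Pb0]|/existsPn none] := boolP [exists b, (t <= price b)%N && (0 < p i b)];
  last first.
  apply: (@le_trans _ _ 0); last exact: sumr_ge0.
  rewrite -oppr_ge0 -sumrN; apply: sumr_ge0 => o to.
  by have := none o; rewrite to /= oppr_ge0 leNgt.
pose P b := (t <= price b)%N && (0 < p i b).
pose upper_size b := #|[set o | pref i o b]|.
have [b Pb b_worst] := @arg_maxnP _ b0 P upper_size Pb0.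
have below_b b' : P b' -> pref i b' b.
  move=> Pb'; apply: contraTT (b_worst b' Pb'); rewrite -ltnNge => not_b'b.
  have bb' : pref i b b' by have := pref_total pref_weak i b' b; rewrite (negbTE not_b'b).
  apply: proper_card; apply/properP; split.
    by apply/subsetP => o; rewrite !inE => ob; exact: (pref_trans pref_weak ob bb').
  by exists b'; rewrite !inE ?pref_refl.
case/andP: Pb => tb pib.
apply: (@le_trans _ _ (\sum_(o | pref i o b) p i o)).
  rewrite /upper_mass big_mkcond [X in _ <= X]big_mkcond /=; apply: ler_sum => o _.
  case: ifP => to; last by case: ifP.
  have [pio|] := boolP (0 < p i o); first by rewrite below_b // /P to.
  by case: ifP => _ //; rewrite leNgt.
apply: le_trans (p'_dom i b) _.
rewrite /upper_mass big_mkcond [X in _ <= X]big_mkcond /=; apply: ler_sum => o _.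
case: ifP => ob; last by case: ifP.
by rewrite (leq_trans tb (price_weak pib ob)).
Qed.

(** A strict gain on some upper contour set gives a strict gain on the
    objects priced at least as much as the cheapest object of that set. *)
Lemma upper_mass_lt j o0 :
  \sum_(o | pref j o o0) p j o < \sum_(o | pref j o o0) p' j o ->
  exists t, upper_mass p j t < upper_mass p' j t.
Proof.
move=> gain.
have [a a_up a_cheapest] := @arg_minnP _ o0 (fun a => pref j a o0) price (pref_refl pref_weak j o0).
exists (price a); apply: (@le_lt_trans _ _ (\sum_(o | pref j o o0) p j o)).
  rewrite /upper_mass big_mkcond [X in _ <= X]big_mkcond /=; apply: ler_sum => o _.
  case: ifP => ao; last by case: ifP.
  have [pjo|] := boolP (0 < p j o); last by case: ifP => _ //; rewrite leNgt.
  case: ifP => // not_up; exfalso.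
  have o0o : pref j o0 o by have := pref_total pref_weak j o o0; rewrite not_up.
  have a_above_o : pref j a o := pref_trans pref_weak a_up o0o.
  have not_oa : ~~ pref j o a.
    by apply/negP => oa; rewrite (pref_trans pref_weak oa a_up) in not_up.
  by have := price_strict pjo a_above_o not_oa; rewrite ltnNge ao.
apply: lt_le_trans gain _.
rewrite /upper_mass big_mkcond [X in _ <= X]big_mkcond /=; apply: ler_sum => o _.
case: ifP => o_up; last by case: ifP.
by rewrite (a_cheapest o o_up).
Qed.

End Dominating.

Lemma price_sd_efficient : sd_efficient pref om p.
Proof.
move=> [p' [[p'_ge0 [p'_quota _]] p'_dom [j [_ [o0 gain]]]]].
have [t gain_t] := upper_mass_lt p'_ge0 gain.
(* summing over agents, p' would exceed the quotas on objects of price >= t *)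
have : \sum_i upper_mass p i t < \sum_i upper_mass p' i t.
  rewrite (bigD1 j) // [X in _ < X](bigD1 j) //=.
  by apply: ltr_leD gain_t _; apply: ler_sum => i _; apply: upper_mass_le.
rewrite /upper_mass exchange_big [X in _ < X]exchange_big /=.
rewrite (eq_bigr (fun o => quota om o)); last by move=> o _; rewrite p_exhausts.
by move/lt_le_trans/(_ (ler_sum _ (fun o _ => p'_quota o))); rewrite ltxx.
Qed.

End PriceEfficiency.

Section Run.
Variables (R : realType) (I O : finType) (pref : I -> rel O).
Hypothesis pref_weak : weak_order pref.
Variables (om : I -> O -> R) (D : nat) (omd pd : nat -> I -> O -> R) (Od : nat -> {set O}).
Hypothesis fee : FEE_endowment om.
Hypothesis run : FTTC_run pref om D omd pd Od.

Lemma run_step d : (d < D)%N -> exists lam beta gam (xI : I -> R) (xO : O -> R),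
  [/\ valid_choice pref (omd d) (pd d) (Od d) lam beta gam,
      trade_feasible pref (omd d) (pd d) (Od d) lam beta gam xI xO,
      (forall i o, omd d.+1 i o =
         if i \in Iact pref (omd d) (pd d) (Od d) then
           (if o \in Od d then omd d i o - lam i o * xO o else 0)
         else omd d i o),
      (forall i o, pd d.+1 i o =
         if i \in Iact pref (omd d) (pd d) (Od d) then
           pd d i o
           - (if o \in Otilde_i pref (pd d) (Od d) i then lam i o * xO o else 0)
           + (if o \in Obar pref (pd d) (Od d) then gam i o * xI i else 0)
         else pd d i o) &
      Od d.+1 = [set o in Od d | 0 < \sum_(i : I) omd d.+1 i o]].
Proof.
move=> dD; case: run => _ _ _ steps _.
case: (steps d dD) => _ [lam [beta [gam [xI [xO [choice [x_feasible _] om'_def p'_def On_def]]]]]].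
by exists lam, beta, gam, xI, xO.
Qed.

Lemma run_nonneg d : (d <= D)%N ->
  [/\ (forall i o, 0 <= omd d i o), (forall i o, 0 <= pd d i o) &
      (forall i o, o \notin Od d -> omd d i o = 0)].
Proof.
elim: d => [|d IH] dD.
  case: run => om0 p0 O0 _ _; case: fee => om_bounds _.
  split=> i o; first by rewrite om0; case/andP: (om_bounds i o).
    by rewrite p0.
  by rewrite O0 inE.
have [om_ge0 p_ge0 om_off] := IH (ltnW dD).
have [lam [beta [gam [xI [xO [choice feas om'_def p'_def On_def]]]]]] := run_step dD.
split.
- exact: (step_om_ge0 choice feas om'_def om_ge0).
- exact: (step_p_ge0 choice feas p'_def p_ge0).
- by move=> i o; apply: (step_om_off choice feas om'_def On_def om_ge0 om_off).
Qed.

Lemma run_conserve d : (d <= D)%N -> forall o, \sum_i (pd d i o + omd d i o) = quota om o.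
Proof.
elim: d => [|d IH] dD o.
  case: run => om0 p0 _ _ _; rewrite /quota; apply: eq_bigr => i _.
  by rewrite om0 p0 add0r.
have [_ _ om_off] := run_nonneg (ltnW dD).
have [lam [beta [gam [xI [xO [choice feas om'_def p'_def _]]]]]] := run_step dD.
by rewrite (step_conserve choice feas om'_def p'_def om_off); apply: IH (ltnW dD) o.
Qed.

Lemma run_IR d : (d <= D)%N -> forall i o0,
  \sum_(o | pref i o o0) om i o <= \sum_(o | pref i o o0) (pd d i o + omd d i o).
Proof.
elim: d => [|d IH] dD i o0.
  case: run => om0 p0 _ _ _; rewrite le_eqVlt; apply/orP; left; apply/eqP/eq_bigr => o _.
  by rewrite om0 p0 add0r.
have [_ _ om_off] := run_nonneg (ltnW dD).
have [lam [beta [gam [xI [xO [choice feas om'_def p'_def _]]]]]] := run_step dD.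
apply: le_trans (IH (ltnW dD) i o0) _.
exact: (step_IR pref_weak choice feas om'_def p'_def om_off).
Qed.

Local Notation reach d := (reachable pref (pd d) (Od d)).

Lemma reach_step d a : (d < D)%N -> reach d.+1 a -> reach d a.
Proof.
move=> dD.
have [lam [beta [gam [xI [xO [choice feas _ p'_def On_def]]]]]] := run_step dD.
elim=> {a} [o oc|j o o' _ IH pjo' oo'].
  by apply: reach_avail; apply: (subsetP (step_On_sub On_def)).
case: (step_support choice feas p'_def pjo') => [pjo'_old|o'B].
  exact: reach_link IH pjo'_old oo'.
by apply: Obar_reachable; move: o'B; rewrite inE => /andP[].
Qed.

Lemma reach_mono d m a : (d <= m)%N -> (m <= D)%N -> reach m a -> reach d a.
Proof.
elim: m => [|m IH] dm mD; first by rewrite leqn0 in dm; rewrite (eqP dm).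
have [dm'|md|->] := ltngtP d m.+1; last by [].
  by move=> /(reach_step mD); apply: IH (ltnW mD).
by rewrite ltnNge dm in md.
Qed.

Lemma held_above_reach d : (d <= D)%N ->
  forall i b a, 0 < pd d i b -> reach d a -> pref i b a.
Proof.
elim: d => [|d IH] dD i b a.
  by case: run => _ p0 _ _ _; rewrite p0 ltxx.
move=> pdb /(reach_step dD) reach_a.
have [lam [beta [gam [xI [xO [choice feas _ p'_def _]]]]]] := run_step dD.
case: (step_support choice feas p'_def pdb) => [pdb_old|bB].
  exact: IH (ltnW dD) _ _ _ pdb_old reach_a.
by apply: (Bset_pref bB); apply: (reachable_Obar pref_weak (IH (ltnW dD)) reach_a).
Qed.

Lemma held_before d m i b : (d <= m)%N -> (m <= D)%N ->
  ~ reach d b -> 0 < pd m i b -> 0 < pd d i b.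
Proof.
elim: m => [|m IH] dm mD unreach_b pmb.
  by rewrite leqn0 in dm; rewrite (eqP dm).
have [dm'|md|-> //] := ltngtP d m.+1; last by rewrite ltnNge dm in md.
have [lam [beta [gam [xI [xO [choice feas _ p'_def _]]]]]] := run_step mD.
case: (step_support choice feas p'_def pmb) => [pmb_old|bB].
  exact: IH dm' (ltnW mD) unreach_b pmb_old.
case: unreach_b; apply: (reach_mono (dm' : (d <= m)%N) (ltnW mD)).
by apply: Obar_reachable; move: bB; rewrite inE => /andP[].
Qed.

Lemma reach_weak d i a b : (d < D)%N -> pref i a b -> 0 < pd D i b ->
  reach d a -> reach d b.
Proof.
move=> dD ab pDb reach_a; case: (classic (reach d b)) => // unreach_b.
have pdb := held_before (ltnW dD) (leqnn D) unreach_b pDb.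
have ba := held_above_reach (ltnW dD) pdb reach_a.
by apply: (reach_link reach_a pdb); rewrite /indiff ab ba.
Qed.

Lemma reach_strict i a b : pref i a b -> ~~ pref i b a -> 0 < pd D i b ->
  exists2 d, (d < D)%N & reach d b /\ ~ reach d a.
Proof.
move=> ab not_ba pDb; apply: NNPP => no_step.
have b_then_a d : (d < D)%N -> reach d b -> reach d a.
  by move=> dD reach_b; apply: NNPP => unreach_a; apply: no_step; exists d.
suff never_held m : (m <= D)%N -> 0 < pd m i b -> False by apply: (never_held D).
elim: m => [|m IH] mD pmb.
  by case: run => _ p0 _ _ _; move: pmb; rewrite p0 ltxx.
have [lam [beta [gam [xI [xO [choice feas _ p'_def _]]]]]] := run_step mD.
case: (step_support choice feas p'_def pmb) => [pmb_old|bB].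
  exact: IH (ltnW mD) pmb_old.
have reach_b : reach m b by apply: Obar_reachable; move: bB; rewrite inE => /andP[].
have aO := reachable_Obar pref_weak (held_above_reach (ltnW mD)) (b_then_a m mD reach_b).
by rewrite (Bset_pref bB aO) in not_ba.
Qed.

Definition unreached d a : nat := if excluded_middle_informative (reach d a) then 0 else 1.
Definition run_price a : nat := \sum_(d < D) unreached d a.

Lemma unreached_reach d a : reach d a -> unreached d a = 0%N.
Proof. by rewrite /unreached; case: excluded_middle_informative. Qed.

Lemma unreached_unreach d a : ~ reach d a -> unreached d a = 1%N.
Proof. by rewrite /unreached; case: excluded_middle_informative. Qed.

Lemma unreached_le1 d a : (unreached d a <= 1)%N.
Proof. by rewrite /unreached; case: excluded_middle_informative. Qed.

Lemma unreached_weak d i a b : (d < D)%N -> pref i a b -> 0 < pd D i b ->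
  (unreached d b <= unreached d a)%N.
Proof.
move=> dD ab pDb; have [reach_a|unreach_a] := classic (reach d a).
  by rewrite (unreached_reach reach_a) (unreached_reach (reach_weak dD ab pDb reach_a)).
by rewrite (unreached_unreach unreach_a); apply: unreached_le1.
Qed.

Lemma run_price_weak i a b : 0 < pd D i b -> pref i a b -> (run_price b <= run_price a)%N.
Proof. by move=> pDb ab; apply: leq_sum => d _; apply: unreached_weak (ltn_ord d) ab pDb. Qed.

Lemma run_price_strict i a b : 0 < pd D i b -> pref i a b -> ~~ pref i b a ->
  (run_price b < run_price a)%N.
Proof.
move=> pDb ab not_ba; have [d dD [reach_b unreach_a]] := reach_strict ab not_ba pDb.
rewrite /run_price (bigD1 (Ordinal dD)) // [X in (_ < X)%N](bigD1 (Ordinal dD)) //=.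
rewrite (unreached_reach reach_b) (unreached_unreach unreach_a).
by rewrite add0n add1n ltnS; apply: leq_sum => d' _; apply: unreached_weak (ltn_ord d') ab pDb.
Qed.

End Run.

Theorem proposition1 (R : realType) (I O : finType) (pref : I -> rel O)
    (om : I -> O -> R) (D : nat) (omd pd : nat -> I -> O -> R) (Od : nat -> {set O}) :
  weak_order pref ->
  FEE_endowment om ->
  FTTC_run pref om D omd pd Od ->
  individually_rational pref om (pd D) /\ sd_efficient pref om (pd D).
Proof.
move=> pref_weak fee run.
have [_ p_ge0 om_off] := run_nonneg fee run (leqnn D).
have om_final i o : omd D i o = 0.
  by apply: om_off; case: run => _ _ _ _ ->; rewrite inE.
split.
  move=> i o0; have := run_IR pref_weak fee run (leqnn D) i o0.
  by under [X in _ <= X -> _]eq_bigr do rewrite om_final addr0.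
apply: (price_sd_efficient pref_weak p_ge0 _ (run_price_weak pref_weak run)
          (run_price_strict pref_weak run)).
move=> o; rewrite -(run_conserve fee run (leqnn D) o).
by apply: eq_bigr => i _; rewrite om_final addr0.
Qed.
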